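(* Let $P$ be a positive opetope of dimension $n$ with top face $x_n=\mathbf{m}_P$. For every maximal flag $\vec{x}$ of $P$ that is not the $\lhd$-largest one, $\mathrm{succ}(\vec{x})$ is the immediate successor of $\vec{x}$ with respect to the flag order $\lhd$ on the set of maximal flags of $P$.
   Context: A positive hypergraph $S$ consists of finite sets $S_k$ ($k\in\mathbb{N}$), only finitely many nonempty, functions $\gamma:S_{k+1}\to S_k$, and for each $k$ an assignment $\delta$ sending each $a\in S_{k+1}$ to a nonempty subset $\delta(a)\subseteq S_k$, with $\delta(a)$ a singleton for $a\in S_1$. A face is identified with its singleton; $\gamma(X)=\{\gamma(a):a\in X\}$, $\delta(X)=\bigcup_{a\in X}\delta(a)$. For $k>0$ the lower order $<^-$ on $S_k$ is the transitive closure of: $a\lhd b$ iff $\gamma(a)\in\delta(b)$. The upper order $<^+$ on $S_k$ is the transitive closure of: $a\lhd b$ iff there is $\alpha\in S_{k+1}$ with $a\in\delta(\alpha)$, $\gamma(\alpha)=b$; $a\perp^{\pm}b$ iff $a<^{\pm}b$ or $b<^{\pm}a$. A positive opetopic cardinal: $S_0\ne\emptyset$; globularity ($\gamma\gamma(a)=\gamma\delta(a)-\delta\delta(a)$, $\delta\gamma(a)=\delta\delta(a)-\gamma\delta(a)$ for $\dim a\ge2$); each $<^+$ a strict order, linear on $S_0$; for $k>0$, $\perp^-\cap\perp^+=\emptyset$ on $S_k$; for $x\in S_{k-1}$, $\{a:\gamma(a)=x\}$ and $\{a:x\in\delta(a)\}$ linearly ordered by $<^+$. A positive opetope: additionally $|P_m-\delta(P_{m+1})|\le1$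 for all $m$; if $\dim P=n$ then $P_n=\{\mathbf m_P\}$. Write $\partial(a)=\{\gamma(a)\}\cup\delta(a)$. A maximal flag is a sequence $\vec{x}=[x_n,\dots,x_0]$ with $x_n=\mathbf m_P$, $x_i\in P_i$ and $x_i\in\partial(x_{i+1})$ for $i<n$. The sign of a sequence $[x_k,\dots,x_l]$ of this kind is $1$ if $k=l$, equals $\mathrm{sgn}([x_{k-1},\dots,x_l])$ if $x_{k-1}=\gamma(x_k)$, and equals $-\mathrm{sgn}([x_{k-1},\dots,x_l])$ if $x_{k-1}\in\delta(x_k)$; $\mathrm{sgn}(\vec x)=\mathrm{sgn}([x_n,\dots,x_0])$. For $x\in P_k$, on the pencil $\{a\in P_{k+1}: x\in\partial(a)\}$ define $a\prec_x b$ iff (i) $\gamma(b)=x\in\delta(a)$, or (ii) $x\in\delta(a)\cap\delta(b)$ and $a<^+b$, or (iii) $\gamma(a)=x=\gamma(b)$ and $b<^+a$. For distinct maximal flags $\vec x,\vec y$ with $k=\min\{j:x_j\ne y_j\}$, put $\vec x\lhd\vec y$ iff $k=0$ and $y_0<^+x_0$; or $k>0$, $\mathrm{sgn}([x_{k-1},\dots,x_0])=1$ and $x_k\prec_{x_{k-1}}y_k$; or $k>0$, $\mathrm{sgn}([x_{k-1},\dots,x_0])=-1$ and $y_k\prec_{x_{k-1}}x_k$. (This is a strict linear order on maximal flags.) For a maximal flag $\vec x$ that is neither $\lhd$-first nor $\lhd$-last, its low level is $\mathrm{ll}(\vec x)=\max\{i<n-1: x_{i+1}\in\delta(x_{i+2})\}$.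 A maximal flag $\vec y$ is the $k$-th neighbour of $\vec x$ if $\vec y\ne\vec x$ and $y_i=x_i$ for all $i\ne k$. The high neighbour of $\vec x$ is its $(n-1)$-th neighbour, the low neighbour its $\mathrm{ll}(\vec x)$-th neighbour. For a non-terminal maximal flag, $\mathrm{succ}(\vec x)$ is the high neighbour of $\vec x$ if $\mathrm{sgn}(\vec x)=1$ and the low neighbour of $\vec x$ if $\mathrm{sgn}(\vec x)=-1$. *)

From HB Require Import structures.
From mathcomp Require Import all_boot all_order all_algebra.
Set Implicit Arguments. Unset Strict Implicit. Unset Printing Implicit Defensive.
Import GRing.Theory Num.Theory.

(* Positive hypergraphs are encoded as a finite type of faces [F] with a
   dimension function [dim] (S_k = faces of dimension k), a codomain map
   [gam] and a domain map [del].  The values of [gam]/[del] on faces of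
   dimension 0 are irrelevant junk and are never used. *)

Section Opetopes.
Variables (F : finType) (dim : F -> nat) (gam : F -> F) (del : F -> {set F}).

Definition delS (X : {set F}) : {set F} := \bigcup_(b in X) del b.

Definition bd (a : F) : {set F} := gam a |: del a.

Definition positive_hypergraph : Prop :=
  (forall a, 0 < dim a -> dim (gam a) = (dim a).-1) /\
  (forall a, 0 < dim a -> del a != set0) /\
  (forall a b, 0 < dim a -> b \in del a -> dim b = (dim a).-1) /\
  (forall a, dim a = 1 -> #|del a| = 1).

Definition lhd_minus (a b : F) : bool :=
  [&& 0 < dim a, dim a == dim b & gam a \in del b].
Definition lt_minus (a b : F) : bool :=
  [exists c, lhd_minus a c && connect lhd_minus c b].

Definition lhd_plus (a b : F) : bool :=
  [exists al, [&& dim al == (dim a).+1, a \in del al & gam al == b]].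
Definition lt_plus (a b : F) : bool :=
  [exists c, lhd_plus a c && connect lhd_plus c b].

Definition perp_minus a b := lt_minus a b || lt_minus b a.
Definition perp_plus a b := lt_plus a b || lt_plus b a.

Definition positive_opetopic_cardinal : Prop :=
  positive_hypergraph /\
  (exists a, dim a = 0) /\
  (forall a, 2 <= dim a ->
     [set gam (gam a)] = (gam @: del a) :\: delS (del a) /\
     del (gam a) = delS (del a) :\: (gam @: del a)) /\
  (forall a, ~~ lt_plus a a) /\
  (forall a b, dim a = 0 -> dim b = 0 -> a != b -> perp_plus a b) /\
  (forall a b, 0 < dim a -> dim a = dim b -> ~~ (perp_minus a b && perp_plus a b)) /\
  (forall x a b, dim a = (dim x).+1 -> dim b = (dim x).+1 ->
      gam a = x -> gam b = x -> a != b -> perp_plus a b) /\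
  (forall x a b, dim a = (dim x).+1 -> dim b = (dim x).+1 ->
      x \in del a -> x \in del b -> a != b -> perp_plus a b).

Definition positive_opetope : Prop :=
  positive_opetopic_cardinal /\
  (forall m, #|[set a | (dim a == m) &&
                 ~~ [exists b, (dim b == m.+1) && (a \in del b)]]| <= 1) /\
  (forall a b, (forall c, dim c <= dim a) -> dim b = dim a -> b = a).

Variable top : F.
Local Notation n := (dim top).

Definition flag := {ffun 'I_n.+1 -> F}.

Definition fa (x : flag) (i : nat) : F := x (inord i).

Definition max_flag (x : flag) : Prop :=
  fa x n = top /\
  (forall i, i <= n -> dim (fa x i) = i) /\
  (forall i, i < n -> fa x i \in bd (fa x i.+1)).

(* sgnrec x l d = sgn([x_{l+d}, ..., x_l]) *)
Fixpoint sgnrec (x : flag) (l d : nat) : int :=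
  match d with
  | 0 => 1%R
  | d'.+1 => if fa x (l + d') == gam (fa x (l + d').+1)
             then sgnrec x l d' else (- sgnrec x l d')%R
  end.

Definition sgn_seg (x : flag) (k : nat) : int := sgnrec x 0 k.
Definition sgn (x : flag) : int := sgn_seg x n.

Definition pencil_lt (x a b : F) : bool :=
  [|| (gam b == x) && (x \in del a),
      [&& x \in del a, x \in del b & lt_plus a b] |
      [&& gam a == x, gam b == x & lt_plus b a]].

Definition flag_lt (x y : flag) : bool :=
  [exists k : 'I_n.+1,
    [&& [forall j : 'I_n.+1, (j < k) ==> (x j == y j)],
        x k != y k &
        if k == 0 :> nat then lt_plus (y k) (x k)
        else ((sgn_seg x k.-1 == 1%R) && pencil_lt (fa x k.-1) (x k) (y k))
          || ((sgn_seg x k.-1 == (-1)%R) && pencil_lt (fa x k.-1) (y k) (x k))]].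

Definition flag_largest (x : flag) : Prop :=
  forall y, max_flag y -> y = x \/ flag_lt y x.

Definition immediate_successor (x y : flag) : Prop :=
  max_flag y /\ flag_lt x y /\
  ~ (exists z, max_flag z /\ flag_lt x z /\ flag_lt z y).

Definition neighbour (k : nat) (x y : flag) : Prop :=
  max_flag y /\ y <> x /\ (forall i, i <= n -> i <> k -> fa y i = fa x i).

Definition is_low_level (x : flag) (k : nat) : Prop :=
  k < n.-1 /\ fa x k.+1 \in del (fa x k.+2) /\
  (forall i, k < i -> i < n.-1 -> fa x i.+1 \notin del (fa x i.+2)).

Definition high_neighbour (x y : flag) : Prop := neighbour n.-1 x y.
Definition low_neighbour (x y : flag) : Prop :=
  exists k, is_low_level x k /\ neighbour k x y.

Definition is_succ (x y : flag) : Prop :=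
  (sgn x = 1%R /\ high_neighbour x y) \/ (sgn x = (-1)%R /\ low_neighbour x y).

End Opetopes.

From mathcomp Require Import all_boot all_order all_algebra.
From mathcomp Require Import zify.
Set Implicit Arguments. Unset Strict Implicit. Unset Printing Implicit Defensive.
Import GRing.Theory Num.Theory.

(* Two maximal flags that differ only in dimension k (neighbours) are compared
   by the sign of [x_{k+1}, ..., x_0].  This comes from the thinness of
   positive opetopes: below a face [a] of dimension at least 2, a face [c] of
   codimension 2 lies in exactly two faces of the boundary of [a], and
   globularity together with the pencil axioms decides on which side of this
   diamond each of them lies.  Hence neighbours have opposite signs, [succ x]
   lies above [x], and [x] is recovered from [succ x]: the neighbour at a given
   level is unique, positive flags are sent to negative ones and conversely,
   and the low level can be read off the image.  The only flag without
   successor is the one going down along [gam] and ending in [del].  Finally,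
   an injective map [s] on a finite chain with [x < s x] wherever defined, and
   defined everywhere except at a single point, sends every element to its
   cover. *)

Section CoveringSuccessor.
Variables (T : finType) (P : T -> Prop) (lt : rel T).
Hypothesis lt_irr : forall x, ~~ lt x x.
Hypothesis lt_trans : forall x y z, P x -> P y -> lt x y -> lt y z -> lt x z.
Hypothesis lt_total : forall x y, P x -> P y -> x <> y -> lt x y \/ lt y x.
Variables (succ : T -> T -> Prop) (terminal : T -> Prop).
Hypothesis succ_lt : forall x y, P x -> succ x y -> P y /\ lt x y.
Hypothesis succ_inj : forall x x' y, P x -> P x' -> succ x y -> succ x' y -> x = x'.
Hypothesis succ_or_terminal : forall x, P x -> (exists y, succ x y) \/ terminal x.
Hypothesis terminal_uniq : forall x x', P x -> P x' -> terminal x -> terminal x' -> x = x'.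

Definition greatest x := forall y, P y -> y = x \/ lt y x.
Definition covers x y := P y /\ lt x y /\ ~ (exists z, P z /\ lt x z /\ lt z y).

Let nabove x := #|[set z | lt x z]|.

Lemma lt_asym x y : P x -> P y -> lt x y -> lt y x -> False.
Proof. by move=> Px Py xy yx; move: (lt_irr x); rewrite (lt_trans Px Py xy yx). Qed.

Lemma nabove_lt x y : P x -> P y -> lt x y -> nabove y < nabove x.
Proof.
move=> Px Py xy; apply: proper_card; apply/properP; split.
  by apply/subsetP=> z; rewrite !inE; apply: lt_trans.
by exists y; rewrite !inE ?xy ?lt_irr.
Qed.

Lemma below_terminal y : P y -> exists t, [/\ P t, terminal t & t = y \/ lt y t].
Proof.
elim: {y}(nabove y) {-2}y (leqnn (nabove y)) => [|m IHm] y le_m Py.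
all: case: (succ_or_terminal Py) => [[y' syy'] | ty]; last by exists y; split=> //; left.
all: have [Py' yy'] := succ_lt Py syy'; have := nabove_lt Py Py' yy'.
  by lia.
move=> lt_y'y; have [|t [Pt tt y't]] := IHm y' _ Py'; first by lia.
by exists t; split=> //; right; case: y't => [-> // | /(lt_trans Py Py' yy')].
Qed.

Lemma terminal_greatest x : P x -> terminal x -> greatest x.
Proof.
move=> Px tx y Py; have [t [Pt tt yt]] := below_terminal Py.
by rewrite (terminal_uniq Pt Px tt tx) in yt; case: yt => [<-|]; [left | right].
Qed.

Lemma succ_or_greatest x : P x -> (exists y, succ x y) \/ greatest x.
Proof.
by move=> Px; case: (succ_or_terminal Px) => [|/(terminal_greatest Px)]; [left | right].
Qed.

(* In [x < z < y] with [y] the successor of [x], the successor [z'] of [z]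
   is neither [y] (injectivity) nor above [y] (else [z < y < z'] is a smaller
   counterexample), so [x < z' < y] and we climb towards [y]. *)
Lemma succ_covers x y : P x -> succ x y -> covers x y.
Proof.
move=> Px sxy; have [Py xy] := succ_lt Px sxy; split=> //; split=> // [[z [Pz [xz zy]]]].
elim: {x y z}(nabove x + nabove z) {-2}x {-2}z (leqnn (nabove x + nabove z)) y
  Px sxy Pz xz zy Py xy => [|m IHm] x z le_m y Px sxy Pz xz zy Py xy.
  by have := nabove_lt Px Pz xz; lia.
case: (succ_or_terminal Pz) => [[z' szz'] | tz]; last first.
  case: (terminal_greatest Pz tz Py) => [yz | yz]; last exact: lt_asym Pz Py zy yz.
  by move: zy; rewrite yz (negbTE (lt_irr z)).
have [Pz' zz'] := succ_lt Pz szz'.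
have [z'y | /eqP z'_neq_y] := eqVneq z' y.
  by move: xz; rewrite (succ_inj Px Pz sxy); [rewrite (negbTE (lt_irr z)) | rewrite -z'y].
case: (lt_total Pz' Py z'_neq_y) => [z'y | yz'].
  apply: (IHm x z' _ y) => //; last exact: lt_trans xz zz'.
  by have := nabove_lt Pz Pz' zz'; lia.
apply: (IHm z y _ z') => //.
by have := nabove_lt Px Py xy; lia.
Qed.

Lemma covers_uniq x y y' : P x -> covers x y -> covers x y' -> y = y'.
Proof.
move=> Px [Py [xy no_y]] [Py' [xy' no_y']]; have [//|/eqP yy'] := eqVneq y y'; exfalso.
case: (lt_total Py Py' yy') => [lt_yy'|lt_y'y].
  by apply: no_y'; exists y.
by apply: no_y; exists y'.
Qed.

Theorem succ_iff_covers x : P x -> ~ greatest x ->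
  forall y, succ x y <-> covers x y.
Proof.
move=> Px not_greatest y; split; first exact: succ_covers.
case: (succ_or_greatest Px) => [[y' sxy'] | //] cov_y.
by rewrite (covers_uniq Px cov_y (succ_covers Px sxy')).
Qed.

End CoveringSuccessor.

Section StrictConnect.
Variables (T : finType) (e : rel T).

Definition sconnect (a b : T) : bool := [exists c, e a c && connect e c b].

Lemma sconnectW a b : sconnect a b -> connect e a b.
Proof. by case/existsP=> c /andP[eac]; apply: connect_trans (connect1 eac). Qed.

Lemma sconnect1 a b : e a b -> sconnect a b.
Proof. by move=> eab; apply/existsP; exists b; rewrite eab connect0. Qed.

Lemma sconnect_trans a b c : sconnect a b -> sconnect b c -> sconnect a c.
Proof.
case/existsP=> d /andP[ead cdb] /sconnectW cbc.
by apply/existsP; exists d; rewrite ead (connect_trans cdb cbc).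
Qed.

Lemma connect_sconnect a b c : connect e a b -> e b c -> sconnect a c.
Proof.
case/connectP=> p; elim: p a => [|a1 p IHp] a /=; first by move=> _ -> /sconnect1.
case/andP=> eaa1 pa1 lastp ebc; apply/existsP; exists a1.
by rewrite eaa1 sconnectW // (IHp a1).
Qed.

End StrictConnect.

Section PositiveOpetope.
Variables (F : finType) (dim : F -> nat) (gam : F -> F) (del : F -> {set F}).
Hypothesis HP : positive_opetope dim gam del.

Local Notation lhdp := (lhd_plus dim gam del).
Local Notation lhdm := (lhd_minus dim gam del).
Local Notation ltp := (lt_plus dim gam del).
Local Notation ltm := (lt_minus dim gam del).

Lemma dim_gam a : 0 < dim a -> dim (gam a) = (dim a).-1.
Proof. by case: HP => [[[H _] _] _]; apply: H. Qed.

Lemma dim_del a b : 0 < dim a -> b \in del a -> dim b = (dim a).-1.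
Proof. by case: HP => [[[_ [_ [H _]]] _] _]; apply: H. Qed.

Lemma card_del_dim1 a : dim a = 1 -> #|del a| = 1.
Proof. by case: HP => [[[_ [_ [_ H]]] _] _]; apply: H. Qed.

Lemma globularity a : 2 <= dim a ->
  [set gam (gam a)] = (gam @: del a) :\: delS del (del a) /\
  del (gam a) = delS del (del a) :\: (gam @: del a).
Proof. by case: HP => [[_ [_ [H _]]] _]; apply: H. Qed.

Lemma lt_plus_irr a : ~~ ltp a a.
Proof. by case: HP => [[_ [_ [_ [H _]]]] _]; apply: H. Qed.

Lemma perp_plus_dim0 a b : dim a = 0 -> dim b = 0 -> a != b ->
  perp_plus dim gam del a b.
Proof. by case: HP => [[_ [_ [_ [_ [H _]]]]] _]; apply: H. Qed.

Lemma perp_minus_plus_disjoint a b : 0 < dim a -> dim a = dim b ->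
  ~~ (perp_minus dim gam del a b && perp_plus dim gam del a b).
Proof. by case: HP => [[_ [_ [_ [_ [_ [H _]]]]]] _]; apply: H. Qed.

Lemma perp_plus_gam_pencil x a b : dim a = (dim x).+1 -> dim b = (dim x).+1 ->
  gam a = x -> gam b = x -> a != b -> perp_plus dim gam del a b.
Proof. by case: HP => [[_ [_ [_ [_ [_ [_ [H _]]]]]]] _]; apply: H. Qed.

Lemma perp_plus_del_pencil x a b : dim a = (dim x).+1 -> dim b = (dim x).+1 ->
  x \in del a -> x \in del b -> a != b -> perp_plus dim gam del a b.
Proof. by case: HP => [[_ [_ [_ [_ [_ [_ [_ H]]]]]]] _]; apply: H. Qed.

Lemma lt_plus_trans a b c : ltp a b -> ltp b c -> ltp a c.
Proof. exact: sconnect_trans. Qed.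

Lemma lt_plus_asym a b : ltp a b -> ltp b a -> False.
Proof. by move=> ab ba; move: (lt_plus_irr a); rewrite (lt_plus_trans ab ba). Qed.

Lemma lt_plus_del a b : 0 < dim a -> b \in del a -> ltp b (gam a).
Proof.
move=> a_pos b_a; apply: sconnect1; apply/existsP; exists a.
by rewrite (dim_del a_pos b_a) b_a !eqxx; lia.
Qed.

Lemma gam_notin_del a : 0 < dim a -> gam a \notin del a.
Proof.
by move=> a_pos; apply/negP=> /(lt_plus_del a_pos); apply/negP/lt_plus_irr.
Qed.

Lemma lhd_minus_gam a b : lhdm a b -> lhdp (gam a) (gam b).
Proof.
case/and3P=> a_pos /eqP dim_ab gam_a_b; apply/existsP; exists b.
by rewrite gam_a_b dim_gam // -dim_ab !eqxx; lia.
Qed.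

Lemma connect_minus_gam a b : connect lhdm a b -> connect lhdp (gam a) (gam b).
Proof.
case/connectP=> p; elim: p a => [|a1 p IHp] a /=; first by move=> _ ->.
case/andP=> /lhd_minus_gam ea pa1 lastp.
exact: connect_trans (connect1 ea) (IHp _ pa1 lastp).
Qed.

(* [a <- a] would give [gam a <+ gam a]. *)
Lemma lt_minus_irr a : ~~ ltm a a.
Proof.
apply/negP=> /existsP[c /andP[/lhd_minus_gam eac /connect_minus_gam ec]].
have: ltp (gam a) (gam a) by apply/existsP; exists (gam c); rewrite eac ec.
by apply/negP/lt_plus_irr.
Qed.

Lemma connect_plus_lift c e a : connect lhdp c e -> gam a = c -> 0 < dim a ->
  exists2 a', connect lhdm a a' & gam a' = e /\ dim a' = dim a.
Proof.
case/connectP=> p; elim: p c a => [|c1 p IHp] c a /=.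
  by move=> _ -> <- _; exists a.
case/andP=> /existsP[a1 /and3P[/eqP dim_a1 c_a1 /eqP gam_a1]] pc1 lastp gam_a a_pos.
have dim_aa1 : dim a = dim a1 by rewrite dim_a1 -gam_a dim_gam //; lia.
have ea : lhdm a a1 by rewrite /lhd_minus a_pos dim_aa1 eqxx gam_a c_a1.
have [|a' a1a' [gam_a' dim_a']] := IHp _ a1 pc1 lastp gam_a1; first by lia.
by exists a'; [apply: connect_trans (connect1 ea) a1a' | rewrite dim_a' dim_aa1].
Qed.

Lemma lt_plus_lift b e : ltp b e ->
  exists a, exists2 a', [/\ b \in del a, dim a = (dim b).+1 & connect lhdm a a'] &
    gam a' = e /\ dim a' = dim a.
Proof.
case/existsP=> c /andP[/existsP[a /and3P[/eqP dim_a b_a /eqP gam_a]] ce].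
have [|a' aa' gam_a'] := connect_plus_lift ce gam_a; first by lia.
by exists a, a'.
Qed.

(* If [b1 <+ b2] inside [del a], lifting the witness gives a face [a1] with
   [b1 \in del a1] and [a1 <- a]; the pencil axiom makes [a1] and [a]
   comparable for [<+] as well, which is forbidden. *)
Lemma not_lt_plus_in_del a b1 b2 : 0 < dim a -> b1 \in del a -> b2 \in del a ->
  ~~ ltp b1 b2.
Proof.
move=> a_pos b1_a b2_a; apply/negP=> /lt_plus_lift[a1 [a2 [b1_a1 dim_a1 a1a2]]].
case=> gam_a2 dim_a2; have dim_b1 := dim_del a_pos b1_a.
have dim_a1a : dim a1 = dim a by lia.
have a2a : lhdm a2 a by rewrite /lhd_minus dim_a2 dim_a1a a_pos eqxx gam_a2 b2_a.
have a1a : ltm a1 a := connect_sconnect a1a2 a2a.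
have [a1_eq_a|a1_neq_a] := eqVneq a1 a.
  by move: (lt_minus_irr a); rewrite -{1}a1_eq_a a1a.
have := perp_minus_plus_disjoint (a := a1) (b := a); rewrite /perp_minus a1a.
by rewrite (perp_plus_del_pencil (x := b1)) //; lia.
Qed.

Lemma not_perp_plus_in_del a b1 b2 : 0 < dim a -> b1 \in del a -> b2 \in del a ->
  ~~ perp_plus dim gam del b1 b2.
Proof. by move=> *; rewrite negb_or !(not_lt_plus_in_del (a := a)). Qed.

Lemma gam_inj_in_del a : 1 < dim a -> {in del a &, injective gam}.
Proof.
move=> a_gt1 b1 b2 b1_a b2_a gam_b12; apply/eqP/negPn/negP=> b12.
have dim_b1 := dim_del (ltnW a_gt1) b1_a; have dim_b2 := dim_del (ltnW a_gt1) b2_a.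
move: (not_perp_plus_in_del (ltnW a_gt1) b1_a b2_a).
by rewrite (perp_plus_gam_pencil (x := gam b1)) // dim_gam; lia.
Qed.

Lemma del_in_del_uniq a b1 b2 c : 1 < dim a -> b1 \in del a -> b2 \in del a ->
  c \in del b1 -> c \in del b2 -> b1 = b2.
Proof.
move=> a_gt1 b1_a b2_a c_b1 c_b2; apply/eqP/negPn/negP=> b12.
have dim_b1 := dim_del (ltnW a_gt1) b1_a; have dim_b2 := dim_del (ltnW a_gt1) b2_a.
move: (not_perp_plus_in_del (ltnW a_gt1) b1_a b2_a).
by rewrite (perp_plus_del_pencil (x := c)) // (dim_del _ c_b1); lia.
Qed.

End PositiveOpetope.

Section Pencil.
Variables (F : finType) (dim : F -> nat) (gam : F -> F) (del : F -> {set F}).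
Hypothesis HP : positive_opetope dim gam del.

Local Notation ltp := (lt_plus dim gam del).
Local Notation bd := (bd gam del).
Local Notation pl := (pencil_lt dim gam del).

Lemma bdE b c : (c \in bd b) = (c == gam b) || (c \in del b).
Proof. exact: in_setU1. Qed.

Lemma in_bd_del b c : c \in bd b -> c != gam b -> c \in del b.
Proof. by rewrite bdE => /orP[/eqP->|//]; rewrite eqxx. Qed.

Lemma dim_bd a b : 0 < dim a -> b \in bd a -> dim b = (dim a).-1.
Proof.
by move=> a_pos; rewrite bdE => /orP[/eqP->|]; [apply: (dim_gam HP) | apply: (dim_del HP)].
Qed.

Lemma gam_in_del_False w c : 0 < dim w -> gam w = c -> c \in del w -> False.
Proof. by move=> w_pos <-; apply/negP; exact: (gam_notin_del HP). Qed.

Lemma pencil_lt_del_gam c u v : c \in del u -> gam v = c -> pl c u v.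
Proof. by move=> c_u gam_v; rewrite /pencil_lt gam_v eqxx c_u. Qed.

Lemma pencil_lt_del_del c u v : c \in del u -> c \in del v -> ltp u v -> pl c u v.
Proof. by move=> c_u c_v uv; rewrite /pencil_lt c_u c_v uv orbT. Qed.

Lemma pencil_lt_gam_gam c u v : gam u = c -> gam v = c -> ltp v u -> pl c u v.
Proof. by move=> gam_u gam_v vu; rewrite /pencil_lt gam_u gam_v eqxx vu !orbT. Qed.

Lemma pencil_lt_asym c u v : 0 < dim u -> 0 < dim v -> pl c u v -> pl c v u -> False.
Proof.
move=> u_pos v_pos; rewrite /pencil_lt.
case/or3P=> [/andP[/eqP e1 h1]|/and3P[h1 h2 h3]|/and3P[/eqP e1 /eqP e2 h3]];
  case/or3P=> [/andP[/eqP f1 g1]|/and3P[g1 g2 g3]|/and3P[/eqP f1 /eqP f2 g3]].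
all: try exact: (lt_plus_asym HP h3 g3).
all: first [exact: (gam_in_del_False (c := c) u_pos) | exact: (gam_in_del_False (c := c) v_pos)].
Qed.

Lemma pencil_lt_trans c u v w : 0 < dim v -> pl c u v -> pl c v w -> pl c u w.
Proof.
move=> v_pos; rewrite {1 2}/pencil_lt.
case/or3P=> [/andP[/eqP e1 h1]|/and3P[h1 h2 h3]|/and3P[/eqP e1 /eqP e2 h3]];
  case/or3P=> [/andP[/eqP f1 g1]|/and3P[g1 g2 g3]|/and3P[/eqP f1 /eqP f2 g3]].
all: try by case: (gam_in_del_False v_pos (c := c)).
- exact: pencil_lt_del_gam.
- exact: pencil_lt_del_gam.
- exact: pencil_lt_del_del g2 (lt_plus_trans h3 g3).
- exact: pencil_lt_gam_gam f2 (lt_plus_trans g3 h3).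
Qed.

Lemma pencil_lt_total c u v : u != v -> c \in bd u -> c \in bd v ->
  dim u = (dim c).+1 -> dim v = (dim c).+1 -> pl c u v || pl c v u.
Proof.
move=> uv c_u c_v dim_u dim_v; move: c_u c_v; rewrite !bdE.
case/orP=> [/eqP c_u | c_u]; case/orP=> [/eqP c_v | c_v].
- case/orP: (perp_plus_gam_pencil HP dim_u dim_v (esym c_u) (esym c_v) uv) => lt_uv.
  + by rewrite (pencil_lt_gam_gam (esym c_v) (esym c_u) lt_uv) orbT.
  + by rewrite (pencil_lt_gam_gam (esym c_u) (esym c_v) lt_uv).
- by rewrite (pencil_lt_del_gam c_v (esym c_u)) orbT.
- by rewrite (pencil_lt_del_gam c_u (esym c_v)).
- case/orP: (perp_plus_del_pencil HP dim_u dim_v c_u c_v uv) => lt_uv.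
  + by rewrite (pencil_lt_del_del c_u c_v lt_uv).
  + by rewrite (pencil_lt_del_del c_v c_u lt_uv) orbT.
Qed.

End Pencil.

Section Diamond.
Variables (F : finType) (dim : F -> nat) (gam : F -> F) (del : F -> {set F}).
Hypothesis HP : positive_opetope dim gam del.

Local Notation bd := (bd gam del).
Local Notation pl := (pencil_lt dim gam del).

Variable a : F.
Hypothesis a_gt1 : 1 < dim a.

Let a_pos : 0 < dim a. Proof. exact: ltnW. Qed.

Lemma in_gam_gamE c :
  (c == gam (gam a)) = (c \in gam @: del a) && (c \notin delS del (del a)).
Proof. by rewrite -in_set1 (globularity HP a_gt1).1 in_setD andbC. Qed.

Lemma in_del_gamE c :
  (c \in del (gam a)) = (c \in delS del (del a)) && (c \notin gam @: del a).
Proof. by rewrite (globularity HP a_gt1).2 in_setD andbC. Qed.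

Lemma in_del_neq_gam b : b \in del a -> b != gam a.
Proof. by apply: contraTneq => ->; apply: (gam_notin_del HP). Qed.

Lemma bd_types_del b b' c : b \in del a -> b' \in del a -> b != b' ->
  c \in bd b -> c \in bd b' -> (c == gam b) != (c == gam b').
Proof.
move=> b_a b'_a bb'; rewrite !bdE.
case: (boolP (c == gam b)) => [/eqP c_b | _]; case: (boolP (c == gam b')) => //=.
  move=> /eqP c_b' _ _.
  by move: bb'; rewrite (gam_inj_in_del HP a_gt1 b_a b'_a (etrans (esym c_b) c_b')) eqxx.
move=> _ c_b c_b'.
by move: bb'; rewrite (del_in_del_uniq HP a_gt1 b_a b'_a c_b c_b') eqxx.
Qed.

Lemma bd_types_gam b c : b \in del a -> c \in bd (gam a) -> c \in bd b ->
  (c == gam b) = (c == gam (gam a)).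
Proof.
move=> b_a; rewrite !bdE; case: (boolP (c == gam (gam a))) => [c_gg _ | c_ng /= c_dg].
  rewrite in_gam_gamE in c_gg; case/andP: c_gg => _ /bigcupP c_nd.
  by case/orP=> // c_b; case: c_nd; exists b.
move: c_dg; rewrite in_del_gamE => /andP[_ c_ng'] _.
by apply: contraNF c_ng' => /eqP->; apply: imset_f.
Qed.

(* The side of the diamond below [a] through [c] on which the face [b] lies:
   [true] exactly when [b] comes first in the pencil of [c]. *)
Definition diamond_side (c b : F) : bool := (c == gam b) == (b == gam a).

Lemma bd_in_del b b' : b \in bd a -> b' \in bd a -> b != b' ->
  b \in del a \/ b' \in del a.
Proof.
rewrite !bdE => /orP[/eqP->|]; last by left.
by case/orP=> [/eqP->|]; [rewrite eqxx | right].
Qed.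

Lemma diamond_side_inj b b' c : b \in bd a -> b' \in bd a -> b != b' ->
  c \in bd b -> c \in bd b' -> diamond_side c b != diamond_side c b'.
Proof.
wlog b'_a : b b' / b' \in del a.
  move=> gen b_a b'_a bb' c_b c_b'; case: (bd_in_del b_a b'_a bb') => [b_a'|]; last first.
    by move=> b'_a'; apply: gen.
  by rewrite eq_sym gen // eq_sym.
move=> b_a _ bb' c_b c_b'; rewrite /diamond_side (negbTE (in_del_neq_gam b'_a)).
move: b_a; rewrite bdE => /orP[/eqP b_gam | b_a].
  move: c_b; rewrite b_gam eqxx => c_b.
  by rewrite (bd_types_gam b'_a c_b c_b'); case: (c == _).
rewrite (negbTE (in_del_neq_gam b_a)).
by move: (bd_types_del b_a b'_a bb' c_b c_b'); case: (c == gam b); case: (c == gam b').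
Qed.

Lemma diamond_thin b1 b2 b3 c : b1 \in bd a -> b2 \in bd a -> b3 \in bd a ->
  b1 != b2 -> b1 != b3 -> b2 != b3 ->
  c \in bd b1 -> c \in bd b2 -> c \in bd b3 -> False.
Proof.
move=> b1_a b2_a b3_a b12 b13 b23 c_b1 c_b2 c_b3.
move: (diamond_side_inj b1_a b2_a b12 c_b1 c_b2) (diamond_side_inj b1_a b3_a b13 c_b1 c_b3).
move: (diamond_side_inj b2_a b3_a b23 c_b2 c_b3).
by case: (diamond_side c b1); case: (diamond_side c b2); case: (diamond_side c b3).
Qed.

Lemma diamond_pencil b b' c : b \in bd a -> b' \in bd a -> b != b' ->
  c \in bd b -> c \in bd b' -> if diamond_side c b then pl c b b' else pl c b' b.
Proof.
wlog b'_a : b b' / b' \in del a.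
  move=> gen b_a b'_a bb' c_b c_b'; case: (bd_in_del b_a b'_a bb') => [b_a'|]; last first.
    by move=> b'_a'; apply: gen.
  have := diamond_side_inj b_a b'_a bb' c_b c_b'; rewrite eq_sym in bb'.
  have := gen _ _ b_a' b'_a b_a bb' c_b' c_b.
  by case: (diamond_side c b); case: (diamond_side c b').
move=> b_a _ bb' c_b c_b'; rewrite /diamond_side.
move: b_a; rewrite bdE => /orP[/eqP b_gam | b_a].
  subst b; rewrite eqxx; have types := bd_types_gam b'_a c_b c_b'.
  have b'_lt : lt_plus dim gam del b' (gam a) by apply: (lt_plus_del HP).
  case: (boolP (c == gam (gam a))) => c_gg /=.
    by apply: pencil_lt_gam_gam b'_lt; apply/esym/eqP; rewrite ?types.
  apply: pencil_lt_del_del b'_lt; last exact: (in_bd_del c_b).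
  by apply: (in_bd_del c_b'); rewrite types.
have types := bd_types_del b_a b'_a bb' c_b c_b'.
rewrite (negbTE (in_del_neq_gam b_a)); case: (boolP (c == gam b)) => c_gb /=.
  apply: pencil_lt_del_gam (esym (eqP c_gb)); apply: (in_bd_del c_b').
  by move: types; rewrite c_gb.
apply: pencil_lt_del_gam; first exact: (in_bd_del c_b).
by apply/esym/eqP; move: types; rewrite (negbTE c_gb); case: (c == gam b').
Qed.

Lemma diamond_exists b c : b \in bd a -> c \in bd b ->
  exists2 b', b' \in bd a & (b' != b) && (c \in bd b').
Proof.
have gam_a_bd : gam a \in bd a by rewrite bdE eqxx.
have del_bd b' : b' \in del a -> b' \in bd a by rewrite bdE => ->; rewrite orbT.
rewrite bdE => /orP[/eqP-> | b_a]; rewrite bdE => /orP[/eqP c_g | c_d].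
- move/eqP: c_g; rewrite in_gam_gamE => /andP[/imsetP[b' b'_a ->] _].
  by exists b'; rewrite ?del_bd // in_del_neq_gam // bdE eqxx.
- move: c_d; rewrite in_del_gamE => /andP[/bigcupP[b' b'_a c_b'] _].
  by exists b'; rewrite ?del_bd // in_del_neq_gam // bdE c_b' orbT.
- have b_pos : 0 < dim b by rewrite (dim_del HP a_pos b_a); lia.
  case: (boolP (c \in delS del (del a))) => [/bigcupP[b' b'_a c_b'] | c_nd].
    exists b'; rewrite ?del_bd // bdE c_b' orbT andbT.
    by apply: contraTneq c_b' => ->; rewrite c_g (gam_notin_del HP b_pos).
  have c_gg : c == gam (gam a) by rewrite in_gam_gamE c_nd c_g imset_f.
  by exists (gam a); rewrite // eq_sym in_del_neq_gam // bdE c_gg.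
- have b_pos : 0 < dim b by rewrite (dim_del HP a_pos b_a); lia.
  have c_dd : c \in delS del (del a) by apply/bigcupP; exists b.
  case: (boolP (c \in gam @: del a)) => [/imsetP[b' b'_a c_g] | c_ng].
    exists b'; rewrite ?del_bd // bdE c_g eqxx andbT.
    by apply: contraTneq c_d => b'b; rewrite c_g b'b (gam_notin_del HP b_pos).
  have c_dg : c \in del (gam a) by rewrite in_del_gamE c_dd c_ng.
  by exists (gam a); rewrite // eq_sym in_del_neq_gam // bdE c_dg orbT.
Qed.

End Diamond.

Section Edge.
Variables (F : finType) (dim : F -> nat) (gam : F -> F) (del : F -> {set F}).
Hypothesis HP : positive_opetope dim gam del.

Local Notation bd := (bd gam del).

Variable a : F.
Hypothesis dim_a : dim a = 1.

Lemma del_dim1 : exists2 d, del a = [set d] & gam a != d.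
Proof.
have [d del_a] := cards1P (introT eqP (card_del_dim1 HP dim_a)); exists d => //.
have a_pos : 0 < dim a by rewrite dim_a.
by apply: contraTneq (gam_notin_del HP a_pos) => ->; rewrite del_a set11.
Qed.

Lemma bd_dim1_side_inj b b' : b \in bd a -> b' \in bd a -> b != b' ->
  (b == gam a) != (b' == gam a).
Proof.
have [d del_a _] := del_dim1.
have in_del b0 : b0 \in bd a -> b0 != gam a -> b0 = d.
  by move=> /in_bd_del b0_a /b0_a; rewrite del_a in_set1 => /eqP.
move=> b_a b'_a; apply: contra_neq.
have [->|b_ng] := eqVneq b (gam a); first by move=> /esym/eqP->.
have [->|b'_ng _] := eqVneq b' (gam a); first by move=> /eqP.
by rewrite (in_del _ b_a b_ng) (in_del _ b'_a b'_ng).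
Qed.

Lemma bd_dim1_thin b1 b2 b3 : b1 \in bd a -> b2 \in bd a -> b3 \in bd a ->
  b1 != b2 -> b1 != b3 -> b2 != b3 -> False.
Proof.
move=> b1_a b2_a b3_a b12 b13 b23.
move: (bd_dim1_side_inj b1_a b2_a b12) (bd_dim1_side_inj b1_a b3_a b13).
move: (bd_dim1_side_inj b2_a b3_a b23).
by case: (b1 == gam a); case: (b2 == gam a); case: (b3 == gam a).
Qed.

Lemma bd_dim1_exists b : b \in bd a -> exists2 b', b' \in bd a & b' != b.
Proof.
have [d del_a gam_d] := del_dim1.
rewrite !bdE del_a in_set1 => /orP[] /eqP->.
  by exists d; rewrite 1?eq_sym // bdE del_a set11 orbT.
by exists (gam a); rewrite // bdE eqxx.
Qed.

End Edge.

Section Flags.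
Variables (F : finType) (dim : F -> nat) (gam : F -> F) (del : F -> {set F}).
Hypothesis HP : positive_opetope dim gam del.
Variable top : F.

Local Notation n := (dim top).
Local Notation ltp := (lt_plus dim gam del).
Local Notation bd := (bd gam del).
Local Notation pl := (pencil_lt dim gam del).
Local Notation flag := (flag dim top).
Local Notation max_flag := (max_flag gam del).
Local Notation flt := (flag_lt gam del).
Local Notation sgnrec := (sgnrec gam).
Local Notation sgn_seg := (sgn_seg gam).
Local Notation sgn := (sgn gam).
Local Notation neighbour := (neighbour gam del).
Implicit Types x y z : flag.

Lemma faE x (j : 'I_n.+1) : x j = fa x j.
Proof. by rewrite /fa inord_val. Qed.

Lemma flag_ext x y : (forall i, i <= n -> fa x i = fa y i) -> x = y.
Proof. by move=> xy; apply/ffunP=> j; rewrite !faE xy // -ltnS. Qed.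

Lemma max_flag_top x : max_flag x -> fa x n = top.
Proof. by case. Qed.

Lemma max_flag_dim x i : max_flag x -> i <= n -> dim (fa x i) = i.
Proof. by case=> _ [dim_x _]; apply: dim_x. Qed.

Lemma max_flag_bd x i : max_flag x -> i < n -> fa x i \in bd (fa x i.+1).
Proof. by case=> _ [_ bd_x]; apply: bd_x. Qed.

Lemma sgnrec_sign x l d : sgnrec x l d = 1%R \/ sgnrec x l d = (-1)%R.
Proof.
elim: d => [|d IHd] /=; first by left.
by case: ifP => _; case: IHd => ->; rewrite ?opprK; [left | right | right | left].
Qed.

Lemma sgn_seg_sign x k : sgn_seg x k = 1%R \/ sgn_seg x k = (-1)%R.
Proof. exact: sgnrec_sign. Qed.

Lemma sgn_segD x m d : sgn_seg x (m + d) = (sgn_seg x m * sgnrec x m d)%R.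
Proof.
rewrite /sgn_seg; elim: d => [|d IHd]; first by rewrite addn0 mulr1.
by rewrite addnS /= add0n IHd; case: ifP; rewrite ?mulrN.
Qed.

Lemma eq_sgnrec x y l d :
  (forall i, l <= i -> i <= l + d -> fa x i = fa y i) -> sgnrec x l d = sgnrec y l d.
Proof.
elim: d => [//|d IHd] xy /=.
have below i : l <= i -> i <= l + d -> fa x i = fa y i by move=> li lid; apply: xy; lia.
by rewrite IHd // !xy //; lia.
Qed.

Lemma sgnrec_gam x l d :
  (forall i, l <= i -> i < l + d -> fa x i = gam (fa x i.+1)) -> sgnrec x l d = 1%R.
Proof.
elim: d => [//|d IHd] x_gam /=.
have below i : l <= i -> i < l + d -> fa x i = gam (fa x i.+1).
  by move=> li lid; apply: x_gam; lia.
by rewrite IHd // x_gam ?eqxx //; lia.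
Qed.

Lemma sgnrec_diamond x l :
  sgnrec x l 2 = if diamond_side gam (fa x l.+2) (fa x l) (fa x l.+1) then 1%R else (-1)%R.
Proof. by rewrite /= addn0 addn1 /diamond_side; do 2 case: (_ == _). Qed.

Lemma sgn_seg1 x : sgn_seg x 1 = if fa x 0 == gam (fa x 1) then 1%R else (-1)%R.
Proof. by []. Qed.

Lemma sgn_seg_diamond x k : sgn_seg x k.+2 =
  (sgn_seg x k * if diamond_side gam (fa x k.+2) (fa x k) (fa x k.+1) then 1 else -1)%R.
Proof. by rewrite -(addn2 k) sgn_segD sgnrec_diamond addn2. Qed.

Definition flag_lt_at x y k : bool :=
  if k == 0 then ltp (fa y k) (fa x k)
  else ((sgn_seg x k.-1 == 1%R) && pl (fa x k.-1) (fa x k) (fa y k))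
    || ((sgn_seg x k.-1 == (-1)%R) && pl (fa x k.-1) (fa y k) (fa x k)).

Lemma flag_ltP x y : reflect
  (exists k, [/\ k <= n, forall j, j < k -> fa x j = fa y j, fa x k != fa y k
                & flag_lt_at x y k])
  (flt x y).
Proof.
apply: (iffP existsP).
  case=> k /and3P[/forallP below neq lt_at].
  have lt_k : flag_lt_at x y k by move: lt_at; rewrite !faE.
  exists k; split=> //; [by rewrite -ltnS | move=> j jk | by rewrite -!faE].
  have jn : j < n.+1 by apply: ltn_trans jk (ltn_ord k).
  by move: (below (Ordinal jn)); rewrite /= jk !faE => /eqP.
case=> k [kn below neq lt_at].
exists (inord k); rewrite !faE inordK //; apply/and3P; split=> //.
by apply/forallP=> j; apply/implyP=> jk; rewrite !faE below.
Qed.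

Lemma flag_lt_irr x : ~~ flt x x.
Proof. by apply/flag_ltP=> [[k [_ _]]]; rewrite eqxx. Qed.

Lemma eq_flag_lt_at x x' y y' k : (forall j, j <= k -> fa x j = fa x' j) ->
  fa y k = fa y' k -> flag_lt_at x y k = flag_lt_at x' y' k.
Proof.
move=> xx' yy'; rewrite /flag_lt_at yy'.
case: k xx' yy' => [|k] xx' _ /=; first by rewrite xx'.
have sg : sgn_seg x k = sgn_seg x' k by apply: eq_sgnrec => i _ ik; apply: xx'; lia.
by rewrite sg !xx' //; lia.
Qed.

Lemma flag_lt_at_irr x k : max_flag x -> k <= n -> ~~ flag_lt_at x x k.
Proof.
move=> x_max kn; rewrite /flag_lt_at; case: k kn => [|k] kn /=; first exact: lt_plus_irr.
have x_pos : 0 < dim (fa x k.+1) by rewrite (max_flag_dim x_max kn).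
by apply/negP; case/orP=> /andP[_ lt_xx]; apply: (pencil_lt_asym HP x_pos x_pos lt_xx).
Qed.

Lemma flag_lt_at_trans x y z k : max_flag y -> k <= n ->
  (forall j, j < k -> fa x j = fa y j) ->
  flag_lt_at x y k -> flag_lt_at y z k -> flag_lt_at x z k.
Proof.
move=> y_max kn xy; rewrite /flag_lt_at; case: k kn xy => [|k] kn xy /=.
  by move=> yx zy; apply: lt_plus_trans zy yx.
have y_pos : 0 < dim (fa y k.+1) by rewrite (max_flag_dim y_max kn).
have sg : sgn_seg y k = sgn_seg x k by apply: eq_sgnrec => i _ ik; rewrite xy //; lia.
rewrite -(xy k) // sg.
case: (sgn_seg_sign x k) => -> /=; rewrite ?andbF ?orbF /=.
  exact: (pencil_lt_trans HP y_pos).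
by move=> yx zy; apply: (pencil_lt_trans HP y_pos zy yx).
Qed.

Lemma flag_lt_trans x y z : max_flag x -> max_flag y -> flt x y -> flt y z -> flt x z.
Proof.
move=> x_max y_max /flag_ltP[k1 [k1n xy1 neq1 lt1]] /flag_ltP[k2 [k2n yz2 neq2 lt2]].
apply/flag_ltP; case: (ltngtP k1 k2) => [k12|k21|k12].
- exists k1; split=> //; first by move=> j jk1; rewrite xy1 ?yz2 //; lia.
    by rewrite -(yz2 _ k12).
  by rewrite -(eq_flag_lt_at (y := y) (fun j _ => erefl) (yz2 _ k12)).
- have xy2 j : j <= k2 -> fa x j = fa y j by move=> jk2; apply: xy1; lia.
  exists k2; split=> //; first by move=> j jk2; rewrite xy2 ?yz2 //; lia.
    by rewrite xy2.
  by rewrite (eq_flag_lt_at (x' := y) xy2 (erefl (fa z k2))).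
- subst k2; exists k1; split=> //; first by move=> j jk1; rewrite xy1 ?yz2.
    apply: contraNneq (flag_lt_at_irr x_max k1n) => xz.
    by apply: flag_lt_at_trans lt1 _ => //; rewrite (eq_flag_lt_at (x' := y) _ xz).
  exact: flag_lt_at_trans lt1 lt2.
Qed.

Lemma flag_first_diff x y : x <> y ->
  exists k, [/\ k <= n, forall j, j < k -> fa x j = fa y j & fa x k != fa y k].
Proof.
move=> xy; have [i xy_i|xy_eq] := pickP (fun i : 'I_n.+1 => fa x i != fa y i); last first.
  case: xy; apply: flag_ext => i i_n.
  by move: (xy_eq (inord i)) => /negbFE/eqP; rewrite inordK.
have: exists k, (k <= n) && (fa x k != fa y k) by exists i; rewrite -ltnS ltn_ord.
case/ex_minnP=> k /andP[kn neq] kmin; exists k; split=> // j jk.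
have jn : j <= n by lia.
by apply/eqP; apply: contraTT jk => neq_j; rewrite -leqNgt kmin // neq_j jn.
Qed.

Lemma flag_lt_at_total x y k : max_flag x -> max_flag y -> k <= n ->
  (forall j, j < k -> fa x j = fa y j) -> fa x k != fa y k ->
  flag_lt_at x y k || flag_lt_at y x k.
Proof.
move=> x_max y_max kn xy neq; rewrite /flag_lt_at; case: k kn xy neq => [|k] kn xy neq /=.
  rewrite orbC; apply: (perp_plus_dim0 HP) => //.
    exact: (max_flag_dim x_max).
  exact: (max_flag_dim y_max).
have sg : sgn_seg y k = sgn_seg x k by apply: eq_sgnrec => i _ ik; rewrite xy //; lia.
have c_x : fa x k \in bd (fa x k.+1) by apply: max_flag_bd.
have c_y : fa x k \in bd (fa y k.+1) by rewrite xy //; apply: max_flag_bd.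
have := pencil_lt_total HP neq c_x c_y.
rewrite (max_flag_dim x_max) ?(max_flag_dim y_max) ?(max_flag_dim x_max (ltnW kn)) //.
move=> /(_ erefl erefl); rewrite sg -(xy k) //.
by case: (sgn_seg_sign x k) => -> /=; case/orP=> ->; rewrite ?orbT.
Qed.

Lemma flag_lt_total x y : max_flag x -> max_flag y -> x <> y -> flt x y \/ flt y x.
Proof.
move=> x_max y_max /flag_first_diff[k [kn below neq]].
case/orP: (flag_lt_at_total x_max y_max kn below neq) => lt_k; [left | right].
  by apply/flag_ltP; exists k.
by apply/flag_ltP; exists k; split; rewrite // 1?eq_sym // => j jk; rewrite below.
Qed.

Section Neighbour.
Variables (k : nat) (x y : flag).
Hypotheses (x_max : max_flag x) (xy : neighbour k x y).

Lemma neighbour_max : max_flag y.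
Proof. by case: xy. Qed.

Lemma neighbour_eq i : i <= n -> i <> k -> fa y i = fa x i.
Proof. by case: xy => _ [_]; apply. Qed.

Lemma neighbour_neq : fa y k != fa x k.
Proof.
case: xy => _ [y_neq_x _]; apply/eqP=> yx_k; apply: y_neq_x; apply: flag_ext => i i_n.
by have [->|/eqP i_k] := eqVneq i k; last apply: neighbour_eq.
Qed.

Lemma neighbour_lt_n : k < n.
Proof.
rewrite ltnNge; apply/negP=> nk; case: xy => y_max [y_neq_x _]; apply: y_neq_x.
apply: flag_ext => i i_n; have [ik|/eqP i_k] := eqVneq i k; last exact: neighbour_eq.
have -> : i = n by lia.
by rewrite (max_flag_top y_max) (max_flag_top x_max).
Qed.

Lemma neighbour_sgn_seg : sgn_seg y k.+1 = (- sgn_seg x k.+1)%R.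
Proof.
have kn := neighbour_lt_n; have neq := neighbour_neq; have y_max := neighbour_max.
have y_k1 : fa y k.+1 = fa x k.+1 by apply: neighbour_eq; lia.
have bd_y : fa y k \in bd (fa x k.+1) by rewrite -y_k1; apply: max_flag_bd.
have bd_x : fa x k \in bd (fa x k.+1) by apply: max_flag_bd.
have below i : i < k -> fa y i = fa x i by move=> ik; apply: neighbour_eq; lia.
case: k neq kn y_k1 bd_y bd_x below => [|j] neq kn y_k1 bd_y bd_x below.
  have := bd_dim1_side_inj HP (max_flag_dim x_max kn) bd_y bd_x neq.
  by rewrite !sgn_seg1 y_k1; do 2 case: (_ == gam _).
have sg : sgn_seg y j = sgn_seg x j by apply: eq_sgnrec => i _ ij; apply: below; lia.
have a_gt1 : 1 < dim (fa x j.+2) by rewrite (max_flag_dim x_max kn).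
have c_y : fa x j \in bd (fa y j.+1) by rewrite -below //; apply: (max_flag_bd y_max); lia.
have c_x : fa x j \in bd (fa x j.+1) by apply: (max_flag_bd x_max); lia.
have := diamond_side_inj HP a_gt1 bd_y bd_x neq c_y c_x.
rewrite !sgn_seg_diamond sg (below j) // y_k1.
case: (diamond_side _ _ _ (fa y _)); case: (diamond_side _ _ _ (fa x _)) => //= _.
  by rewrite mulrN opprK.
by rewrite mulrN.
Qed.

Lemma neighbour_sgn : sgn y = (- sgn x)%R.
Proof.
have kn := neighbour_lt_n; rewrite /sgn -(subnKC kn) !sgn_segD neighbour_sgn_seg mulNr.
by congr (- (_ * _))%R; apply: eq_sgnrec => i ki i_n; apply: neighbour_eq; lia.
Qed.

Lemma neighbour_lt : sgn_seg x k.+1 = 1%R -> flt x y.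
Proof.
move=> sg1; have kn := neighbour_lt_n; have neq := neighbour_neq; have y_max := neighbour_max.
have below i : i < k -> fa x i = fa y i by move=> ik; rewrite neighbour_eq //; lia.
apply/flag_ltP; exists k; split; [lia | exact: below | by rewrite eq_sym | ].
have y_k1 : fa y k.+1 = fa x k.+1 by apply: neighbour_eq; lia.
have bd_y : fa y k \in bd (fa x k.+1) by rewrite -y_k1; apply: max_flag_bd.
have bd_x : fa x k \in bd (fa x k.+1) by apply: max_flag_bd.
rewrite /flag_lt_at.
case: k sg1 neq kn below y_k1 bd_y bd_x => [|j] sg1 neq kn below y_k1 bd_y bd_x /=.
  move: sg1; rewrite sgn_seg1; case: eqP => // x0 _; rewrite x0.
  apply: (lt_plus_del HP); first by rewrite (max_flag_dim x_max kn).
  by apply: (in_bd_del bd_y); rewrite -x0.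
have a_gt1 : 1 < dim (fa x j.+2) by rewrite (max_flag_dim x_max kn).
have c_y : fa x j \in bd (fa y j.+1) by rewrite below //; apply: (max_flag_bd y_max); lia.
have c_x : fa x j \in bd (fa x j.+1) by apply: (max_flag_bd x_max); lia.
rewrite eq_sym in neq; have := diamond_pencil HP a_gt1 bd_x bd_y neq c_x c_y.
move: sg1; rewrite sgn_seg_diamond.
case: (sgn_seg_sign x j) => ->; case: (diamond_side _ _ _ _) => //= _ ->; rewrite ?orbT //.
Qed.

End Neighbour.

Lemma neighbour_of_face k x b : max_flag x -> k < n -> b \in bd (fa x k.+1) ->
  b != fa x k -> (0 < k -> fa x k.-1 \in bd b) -> exists y, neighbour k x y.
Proof.
move=> x_max kn b_bd b_neq bd_b.
pose y : flag := [ffun i : 'I_n.+1 => if i == k :> nat then b else x i].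
have fa_y i : i <= n -> fa y i = if i == k then b else fa x i.
  by move=> i_n; rewrite /fa ffunE inordK.
exists y; split; last split.
- split; first by rewrite fa_y // gtn_eqF // max_flag_top.
  split=> i i_n.
    rewrite fa_y //; case: eqP => [->|_]; last exact: max_flag_dim.
    by rewrite (dim_bd HP _ b_bd) (max_flag_dim x_max) //; lia.
  rewrite !fa_y ?(ltnW i_n) //; have [ik|i_neq_k] := eqVneq i k.
    by rewrite ik (gtn_eqF (ltnSn k)).
  have [ik1|_] := eqVneq i.+1 k; last exact: max_flag_bd.
  by move: bd_b; rewrite -ik1; apply.
- by move/(congr1 (fun z : flag => fa z k)); rewrite fa_y ?eqxx; [apply/eqP | lia].
- by move=> i i_n /eqP i_k; rewrite fa_y // (negbTE i_k).
Qed.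

Lemma neighbour_exists k x : max_flag x -> k < n -> exists y, neighbour k x y.
Proof.
move=> x_max kn; have x_bd := max_flag_bd x_max kn.
case: k kn x_bd => [|j] kn x_bd.
  have [b b_bd b_neq] := bd_dim1_exists HP (max_flag_dim x_max kn) x_bd.
  exact: neighbour_of_face b_bd b_neq _.
have a_gt1 : 1 < dim (fa x j.+2) by rewrite (max_flag_dim x_max kn).
have [b b_bd /andP[b_neq c_b]] := diamond_exists HP a_gt1 x_bd (max_flag_bd x_max (ltnW kn)).
exact: neighbour_of_face b_bd b_neq _.
Qed.

Lemma neighbour_inj k x x' y : max_flag x -> max_flag x' ->
  neighbour k x y -> neighbour k x' y -> x = x'.
Proof.
move=> x_max x'_max xy x'y; have kn := neighbour_lt_n x_max xy.
have y_max := neighbour_max xy.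
apply: flag_ext => i i_n; have [->|/eqP ik] := eqVneq i k; last first.
  by rewrite -(neighbour_eq xy) ?(neighbour_eq x'y).
apply/eqP/negPn/negP=> xx'.
have neq : fa x k != fa y k by rewrite eq_sym (neighbour_neq xy).
have neq' : fa x' k != fa y k by rewrite eq_sym (neighbour_neq x'y).
have below z j : neighbour k z y -> j <= n -> j != k -> fa z j = fa y j.
  by move=> zy j_n /eqP jk; rewrite (neighbour_eq zy).
have bd_z z : max_flag z -> neighbour k z y -> fa z k \in bd (fa y k.+1).
  by move=> z_max zy; rewrite -(below z) //; [apply: max_flag_bd | rewrite gtn_eqF].
have bd_y := max_flag_bd y_max kn.
case: k kn i_n xx' xy x'y neq neq' below bd_z bd_y => [|j] kn _ xx' xy x'y neq neq' below bd_z bd_y.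
  exact: (bd_dim1_thin HP (max_flag_dim y_max kn) (bd_z _ x_max xy) (bd_z _ x'_max x'y) bd_y).
have a_gt1 : 1 < dim (fa y j.+2) by rewrite (max_flag_dim y_max kn).
have c_z z : max_flag z -> neighbour j.+1 z y -> fa y j \in bd (fa z j.+1).
  move=> z_max zy; rewrite -(below z j) //; last by rewrite ltn_eqF.
    by apply: (max_flag_bd z_max); lia.
  by lia.
apply: (diamond_thin HP a_gt1 (bd_z _ x_max xy) (bd_z _ x'_max x'y) bd_y xx' neq neq').
- exact: c_z.
- exact: c_z.
- by apply: (max_flag_bd y_max); lia.
Qed.

Lemma max_flag_gam x j : max_flag x -> j < n -> fa x j \notin del (fa x j.+1) ->
  fa x j = gam (fa x j.+1).
Proof.
by move=> x_max jn; move: (max_flag_bd x_max jn); rewrite bdE => /orP[/eqP|->].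
Qed.

Lemma sgn_gam_above x m : m <= n ->
  (forall j, m <= j -> j < n -> fa x j = gam (fa x j.+1)) -> sgn x = sgn_seg x m.
Proof.
move=> mn x_gam; rewrite /sgn -(subnKC mn) sgn_segD sgnrec_gam ?mulr1 //.
by move=> j mj jn; apply: x_gam; lia.
Qed.

Local Notation is_low_level := (is_low_level del).

Lemma sgn_low_level k x : max_flag x -> is_low_level x k -> sgn x = (- sgn_seg x k.+1)%R.
Proof.
move=> x_max [kn [x_del above]].
have x_k1 : fa x k.+1 != gam (fa x k.+2).
  apply: contraTneq x_del => ->; apply: (gam_notin_del HP).
  by rewrite (max_flag_dim x_max); lia.
rewrite (@sgn_gam_above _ k.+2); first by rewrite -addn1 sgn_segD /= addn0 (negbTE x_k1) mulrN1.
  by lia.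
move=> j kj jn; apply: max_flag_gam => //.
by have := above j.-1; rewrite prednK; [apply; lia | lia].
Qed.

Lemma low_level_uniq k k' x x' y : is_low_level x k -> is_low_level x' k' ->
  neighbour k x y -> neighbour k' x' y -> k = k'.
Proof.
wlog kk' : k k' x x' / k <= k'.
  by move=> gen xk x'k' xy x'y; case: (leqP k k') => [|/ltnW] kk';
    [apply: gen xk x'k' xy x'y | apply/esym/(gen _ _ _ _ kk' x'k' xk x'y xy)].
move=> [kn [x_del above]] [k'n [x'_del _]] xy x'y.
move: kk'; rewrite leq_eqVlt => /orP[/eqP //|kk'_lt]; have := above k' kk'_lt k'n.
by rewrite -!(neighbour_eq xy) ?(neighbour_eq x'y) ?x'_del //; lia.
Qed.

Lemma low_level_exists x i : i < n.-1 -> fa x i.+1 \in del (fa x i.+2) ->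
  exists k, is_low_level x k.
Proof.
move=> i_n x_del_i.
have low_ex : exists i, (i < n.-1) && (fa x i.+1 \in del (fa x i.+2)).
  by exists i; rewrite i_n.
have low_bound j : (j < n.-1) && (fa x j.+1 \in del (fa x j.+2)) -> j <= n.
  by case/andP=> j_n _; lia.
have [k /andP[kn x_del] kmax] := ex_maxnP low_ex low_bound.
exists k; split=> //; split=> // j kj j_n; apply: contraTN kj => x_del_j.
by rewrite -leqNgt kmax // j_n.
Qed.

Local Notation is_succ := (is_succ gam del).

Lemma is_succ_lt x y : max_flag x -> is_succ x y -> max_flag y /\ flt x y.
Proof.
move=> x_max [[sg xy] | [sg [k [x_low xy]]]]; split; try exact: neighbour_max xy.
  apply: (neighbour_lt x_max xy); rewrite prednK //.
  by have := neighbour_lt_n x_max xy; lia.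
apply: (neighbour_lt x_max xy); apply: oppr_inj.
by rewrite -(sgn_low_level x_max x_low).
Qed.

Lemma is_succ_inj x x' y : max_flag x -> max_flag x' -> is_succ x y -> is_succ x' y -> x = x'.
Proof.
move=> x_max x'_max [[sg xy] | [sg [k [x_low xy]]]] [[sg' x'y] | [sg' [k' [x'_low x'y]]]].
- exact: neighbour_inj x_max x'_max xy x'y.
- by have := neighbour_sgn x_max xy; rewrite (neighbour_sgn x'_max x'y) sg sg'.
- by have := neighbour_sgn x_max xy; rewrite (neighbour_sgn x'_max x'y) sg sg'.
- have kk' := low_level_uniq x_low x'_low xy x'y; subst k'.
  exact: neighbour_inj x_max x'_max xy x'y.
Qed.

Definition terminal_flag x : Prop :=
  (forall j, 0 < j -> j < n -> fa x j = gam (fa x j.+1)) /\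
  (0 < n -> fa x 0 \in del (fa x 1)).

Lemma terminal_flag_uniq x x' : max_flag x -> max_flag x' ->
  terminal_flag x -> terminal_flag x' -> x = x'.
Proof.
move=> x_max x'_max [x_gam x_del] [x'_gam x'_del].
have top_down m : m < n -> fa x (n - m) = fa x' (n - m).
  elim: m => [|m IHm] mn; first by rewrite subn0 !max_flag_top.
  have j_pos : 0 < n - m.+1 by lia.
  have jn : n - m.+1 < n by lia.
  have e : (n - m.+1).+1 = n - m by lia.
  by rewrite (x_gam _ j_pos jn) (x'_gam _ j_pos jn) e IHm //; lia.
apply: flag_ext => i i_n; case: (posnP i) => [-> | i_pos]; last first.
  by have := top_down (n - i); rewrite subKn //; apply; lia.
case: (posnP n) => [n0 | n_pos].
  by move: (max_flag_top x_max) (max_flag_top x'_max); rewrite n0 => -> ->.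
have x_1 : fa x 1 = fa x' 1 by have := top_down n.-1; rewrite -subn1 subKn //; apply; lia.
have [d del_x1 _] := del_dim1 HP (max_flag_dim x_max n_pos).
by move: (x_del n_pos) (x'_del n_pos); rewrite -x_1 del_x1 !in_set1 => /eqP-> /eqP->.
Qed.

Lemma is_succ_or_terminal x : max_flag x -> (exists y, is_succ x y) \/ terminal_flag x.
Proof.
move=> x_max; case: (posnP n) => [n0 | n_pos].
  by right; split=> [j|]; rewrite n0 //; lia.
case: (sgn_seg_sign x n) => sg.
  have nn : n.-1 < n by lia.
  have [y xy] := neighbour_exists x_max nn.
  by left; exists y; left.
have [|no_low] := boolP [exists i : 'I_n.-1, fa x i.+1 \in del (fa x i.+2)].
  case/existsP=> i /(low_level_exists (ltn_ord i)) [k x_low].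
  have kn : k < n by case: x_low; lia.
  have [y xy] := neighbour_exists x_max kn.
  by left; exists y; right; split=> //; exists k.
move/existsPn: no_low => no_low; right.
have x_gam j : 0 < j -> j < n -> fa x j = gam (fa x j.+1).
  move=> j_pos jn; apply: max_flag_gam => //.
  have jn' : j.-1 < n.-1 by lia.
  by move: (no_low (Ordinal jn')); rewrite /= prednK.
split=> // _; apply: (in_bd_del (max_flag_bd x_max n_pos)).
by apply: contra_eqN sg => x_0; rewrite -/(sgn x) (sgn_gam_above (m := 1)) // sgn_seg1 x_0.
Qed.

End Flags.

Theorem mainTheorem10 (F : finType) (dim : F -> nat) (gam : F -> F)
    (del : F -> {set F}) (HP : positive_opetope dim gam del)
    (top : F) (Htop : forall c, dim c <= dim top)
    (x : flag dim top) (Hx : max_flag gam del x)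
    (Hnl : ~ flag_largest gam del x) :
  forall y : flag dim top,
    is_succ gam del x y <-> immediate_successor gam del x y.
Proof.
exact: (succ_iff_covers (flag_lt_irr gam del (top := top)) (flag_lt_trans HP (top := top))
  (flag_lt_total HP (top := top)) (is_succ_lt HP (top := top)) (is_succ_inj HP (top := top))
  (is_succ_or_terminal HP (top := top)) (terminal_flag_uniq HP (top := top)) Hx Hnl).
Qed.
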